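(* For any composition $\beta$ of an even positive integer, \[\sum_{\substack{\alpha\le\beta\\ a_1,a_k\ \text{odd}}}(-1)^{k_e(\alpha)}\,2^{k_o(\beta)-k_o(\alpha)+1}\,C\bigl(k_o(\alpha)/2-1\bigr)=2^{k_o(\beta)}-\binom{k_o(\beta)}{k_o(\beta)/2},\] where the sum is over those compositions $\alpha=(a_1,\ldots,a_k)$ whose first and last parts are odd and which are refined by $\beta$.
   Context: A composition is a finite sequence of positive integers; $k_e(\alpha)$, $k_o(\alpha)$ are its numbers of even and odd parts. $\alpha\le\beta$ means $\beta$ refines $\alpha$ (obtained from $\alpha$ by splitting parts), including $\alpha=\beta$. $C(j)=\frac{1}{j+1}\binom{2j}{j}$ is the Catalan number. *)

From mathcomp Require Import all_boot all_order all_algebra.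
Set Implicit Arguments. Unset Strict Implicit. Unset Printing Implicit Defensive.

Definition is_composition (a : seq nat) : bool := all (fun x => 0 < x) a.

Definition k_e (a : seq nat) : nat := count (fun x => ~~ odd x) a.
Definition k_o (a : seq nat) : nat := count odd a.

(* refines a b : b refines a (a <= b), i.e. b is obtained from a by splitting
   parts: b is cut into consecutive nonempty blocks whose sums are the parts
   of a (in order). *)
Fixpoint refines (a b : seq nat) : bool :=
  match a with
  | [::] => b == [::]
  | x :: a' => has (fun j => (sumn (take j b) == x) && refines a' (drop j b))
                   (iota 1 (size b))
  end.

Fixpoint comps_aux (fuel n : nat) : seq (seq nat) :=
  match fuel with
  | 0 => if n == 0 then [:: [::]] else [::]
  | fuel'.+1 =>
      if n == 0 then [:: [::]]
      else flatten [seq map (cons k) (comps_aux fuel' (n - k)) | k <- iota 1 n]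
  end.
Definition compositions (n : nat) : seq (seq nat) := comps_aux n n.

Definition catalan (j : nat) : nat := 'C(j.*2, j) %/ j.+1.

From mathcomp Require Import all_boot all_order all_algebra.
From mathcomp Require Import zify.
Import GRing.Theory Num.Theory.
Set Implicit Arguments. Unset Strict Implicit. Unset Printing Implicit Defensive.

(* Split the coarsenings alpha of beta = (b, c, ...) according to whether b
   stays a part of alpha or is merged into the next part; the latter are
   exactly the coarsenings of (b + c, ...).  Comparing the two families gives,
   by induction, that the sum of (-1)^(k_e alpha) f(k_o alpha) over the
   coarsenings with odd last part is f(k_o beta) if b is odd and 0 otherwise.
   Requiring also an odd first part, the sum collapses to
   sum_(i < n/2) f(n - 2i) with n = k_o beta = 2m, which for the weight of the
   corollary is sum_(i < m) 2^(2i+1) C(m-i-1).  This equals 4^m - binom(2m, m),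
   as both satisfy the recursion coming from
   binom(2m+2, m+1) = 4 binom(2m, m) - 2 C(m). *)

Definition merge_first (b : nat) (a : seq nat) : seq nat :=
  if a is a0 :: a' then (b + a0) :: a' else [:: b].

Fixpoint coarsenings (s : seq nat) : seq (seq nat) :=
  match s with
  | [::] => [:: [::]]
  | b :: r =>
      if r is [::] then [:: [:: b]]
      else map (cons b) (coarsenings r) ++ map (merge_first b) (coarsenings r)
  end.

Lemma coarsenings_cons2 b c r : coarsenings [:: b, c & r] =
  map (cons b) (coarsenings (c :: r)) ++ map (merge_first b) (coarsenings (c :: r)).
Proof. by []. Qed.

Lemma map_merge_first_coarsenings b c r :
  map (merge_first b) (coarsenings (c :: r)) = coarsenings ((b + c) :: r).
Proof.
case: r => [|d r] //; rewrite !coarsenings_cons2 map_cat -!map_comp.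
by congr (_ ++ _); apply: eq_map => -[|a0 a'] //=; rewrite addnA.
Qed.

Lemma coarsening_of_cons b r a :
  a \in coarsenings (b :: r) -> exists a0 a', a = a0 :: a'.
Proof.
case: r => [|c r]; first by rewrite inE => /eqP ->; eauto.
rewrite coarsenings_cons2 mem_cat => /orP[] /mapP[[|x0 x'] _ ->] /=; eauto.
Qed.

Lemma sumn_coarsening s a : a \in coarsenings s -> sumn a = sumn s.
Proof.
elim: s a => [|b [|c r] IH] a; try by rewrite inE => /eqP ->.
rewrite coarsenings_cons2 mem_cat => /orP[] /mapP[x x_in ->] /=.
  by rewrite (IH _ x_in).
have [x0 [x' Ex]] := coarsening_of_cons x_in.
by move: (IH _ x_in); rewrite Ex /= => <-; rewrite addnA.
Qed.

Lemma is_composition_cons x s :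
  is_composition (x :: s) = (0 < x) && is_composition s.
Proof. by []. Qed.

Lemma coarsening_composition s a :
  is_composition s -> a \in coarsenings s -> is_composition a.
Proof.
elim: s a => [|b [|c r] IH] a; try by move=> ? /[!inE] /eqP ->.
rewrite is_composition_cons => /andP[b_gt0 comp_r]; rewrite coarsenings_cons2 mem_cat.
case/orP=> /mapP[x x_in ->] /=; first by rewrite b_gt0 (IH _ comp_r x_in).
have [x0 [x' Ex]] := coarsening_of_cons x_in.
by move: (IH _ comp_r x_in); rewrite Ex /= => /andP[_ ->]; rewrite addn_gt0 b_gt0.
Qed.

Lemma uniq_coarsenings s : is_composition s -> uniq (coarsenings s).
Proof.
elim: s => [|b [|c r] IH] //; rewrite is_composition_cons => /andP[b_gt0 comp_r].
rewrite coarsenings_cons2 cat_uniq; apply/and3P; split.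
- by rewrite map_inj_uniq ?IH // => x y [].
- apply/hasPn => _ /mapP[x x_in ->]; apply/negP => /mapP[y _].
  have [x0 [x' Ex]] := coarsening_of_cons x_in.
  have := coarsening_composition comp_r x_in; rewrite Ex /= => /andP[x0_gt0 _].
  by case=> b_eq _; lia.
- rewrite map_inj_in_uniq ?IH // => x y x_in y_in.
  have [x0 [x' ->]] := coarsening_of_cons x_in.
  by have [y0 [y' ->]] := coarsening_of_cons y_in; case=> /addnI -> ->.
Qed.

Lemma refines_cons x a s : refines (x :: a) s =
  has (fun j => (sumn (take j s) == x) && refines a (drop j s)) (iota 1 (size s)).
Proof. by []. Qed.

Lemma coarsening_refines s a : a \in coarsenings s -> refines a s.
Proof.
elim: s a => [|b r IH] a; first by rewrite inE => /eqP ->.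
case: r IH => [|c r] IH; first by rewrite inE => /eqP ->; rewrite /= addn0 eqxx.
rewrite coarsenings_cons2 mem_cat => /orP[] /mapP[x x_in ->].
  rewrite refines_cons; apply/hasP; exists 1; first by rewrite mem_iota.
  by rewrite /= addn0 eqxx IH.
have [x0 [x' Ex]] := coarsening_of_cons x_in.
move: (IH _ x_in); rewrite Ex refines_cons => /hasP[j].
rewrite mem_iota => /andP[_ j_le] /andP[sum_j ref_j].
rewrite refines_cons; apply/hasP; exists j.+1.
  by rewrite mem_iota /= ltnS (leq_trans j_le).
by rewrite /= (eqP sum_j) eqxx.
Qed.

Lemma refines_coarsening s a : refines a s -> a \in coarsenings s.
Proof.
elim: s a => [|b r IH] [|x a] //.
rewrite refines_cons => /hasP[[|[|j]]]; rewrite mem_iota //.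
  rewrite [take _ _]/= [drop _ _]/= take0 drop0 [sumn _]/= addn0.
  move=> _ /andP[/eqP <- /IH].
  case: r {IH} => [|c r]; first by rewrite !inE => /eqP ->.
  by move=> a_in; rewrite coarsenings_cons2 mem_cat map_f.
case: r IH => [|c r] IH //; rewrite [take _ _]/= [drop _ _]/=.
move=> j_le /andP[/eqP <- ref_j].
have /IH first_block : refines (sumn (take j.+1 (c :: r)) :: a) (c :: r).
  rewrite refines_cons; apply/hasP; exists j.+1; last by rewrite eqxx.
  by rewrite mem_iota /= ltnS -ltnS.
by rewrite coarsenings_cons2 mem_cat (map_f _ first_block) orbT.
Qed.

Lemma mem_coarsenings s a : (a \in coarsenings s) = refines a s.
Proof. by apply/idP/idP => [/coarsening_refines | /refines_coarsening]. Qed.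

Lemma uniq_comps_aux fuel n : uniq (comps_aux fuel n).
Proof.
elim: fuel n => [|fuel IH] n /=; first by case: (n == 0).
case: (n == 0) => //; apply: allpairs_uniq_dep => //; first exact: iota_uniq.
by move=> [k a] [l b] _ _ [-> ->].
Qed.

Lemma mem_comps_aux fuel a :
  is_composition a -> sumn a <= fuel -> a \in comps_aux fuel (sumn a).
Proof.
elim: fuel a => [|fuel IH] [|x a]; rewrite ?is_composition_cons //=; try by rewrite inE.
  by move=> /andP[x_gt0 _]; lia.
move=> /andP[x_gt0 comp_a] sum_le.
have -> : (x + sumn a == 0) = false by lia.
apply/allpairsPdep; exists x, a; split=> //; first by rewrite mem_iota; lia.
by rewrite addKn IH //; lia.
Qed.

Lemma perm_refines_coarsenings beta : is_composition beta ->
  perm_eq [seq a <- compositions (sumn beta) | refines a beta] (coarsenings beta).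
Proof.
move=> comp_beta; apply: uniq_perm.
- by rewrite filter_uniq // uniq_comps_aux.
- exact: uniq_coarsenings.
move=> a; rewrite mem_filter mem_coarsenings andb_idr // => /refines_coarsening a_in.
rewrite /compositions -(sumn_coarsening a_in) mem_comps_aux //.
exact: coarsening_composition comp_beta a_in.
Qed.

Section SignedSums.

Local Open Scope ring_scope.

Variable R : ringType.

Lemma sum_coarsenings_odd_last s (f : nat -> R) :
  \sum_(a <- coarsenings s | odd (last 0%N a)) (-1) ^+ k_e a * f (k_o a)
  = if odd (head 0%N s) then f (k_o s) else 0.
Proof.
case: s => [|b r]; first by rewrite big_cons big_nil addr0.
elim: r b f => [|c r IH] b f.
  rewrite big_cons big_nil addr0 /k_e /k_o /=.
  by case: (odd b) => //=; rewrite mul1r.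
rewrite coarsenings_cons2 map_merge_first_coarsenings big_cat big_map IH.
have -> : \sum_(a <- coarsenings (c :: r) | odd (last 0%N (b :: a)))
      (-1) ^+ k_e (b :: a) * f (k_o (b :: a))
    = (-1) ^+ (~~ odd b) * \sum_(a <- coarsenings (c :: r) | odd (last 0%N a))
      (-1) ^+ k_e a * f (odd b + k_o a)%N.
  rewrite mulr_sumr big_seq_cond [RHS]big_seq_cond.
  apply: eq_big => [a | a /andP[a_in _]].
    by case: (boolP (a \in _)) => // /coarsening_of_cons[a0 [a' ->]].
  by have [a0 [a' ->]] := coarsening_of_cons a_in; rewrite /k_e /k_o exprD mulrA.
rewrite (IH c (fun n => f (odd b + n)%N)) /k_o /= oddD.
by case: (odd b); case: (odd c) => /=;
  rewrite ?mulr0 ?expr0 ?expr1 ?mul1r ?mulN1r ?addr0 ?add0r ?addNr.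
Qed.

Lemma sum_coarsenings_odd_ends s (f : nat -> R) :
  \sum_(a <- coarsenings s | odd (head 0%N a) && odd (last 0%N a))
     (-1) ^+ k_e a * f (k_o a)
  = \sum_(i < uphalf (k_o s)) f (k_o s - i.*2)%N.
Proof.
case: s => [|b r]; first by rewrite big_cons big_nil addr0 big_ord0.
elim: r b f => [|c r IH] b f.
  rewrite big_cons big_nil addr0 /k_e /k_o /=; case: (odd b); last by rewrite big_ord0.
  by rewrite big_ord1 expr0 mul1r.
rewrite coarsenings_cons2 map_merge_first_coarsenings big_cat big_map IH.
have -> : \sum_(a <- coarsenings (c :: r) |
                odd (head 0%N (b :: a)) && odd (last 0%N (b :: a)))
      (-1) ^+ k_e (b :: a) * f (k_o (b :: a))
    = if odd b then \sum_(a <- coarsenings (c :: r) | odd (last 0%N a))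
      (-1) ^+ k_e a * f (1 + k_o a)%N else 0.
  case: (boolP (odd b)) => [odd_b | even_b]; last first.
    by rewrite big_pred0 // => a /=; rewrite (negbTE even_b).
  rewrite big_seq_cond [RHS]big_seq_cond; apply: eq_big => [a | a /andP[a_in _]].
    by case: (boolP (a \in _)) => // /coarsening_of_cons[a0 [a' ->]].
  by have [a0 [a' ->]] := coarsening_of_cons a_in; rewrite /k_e /k_o /= odd_b.
rewrite (sum_coarsenings_odd_last (c :: r) (fun n => f (1 + n)%N)) /k_o /= oddD.
case: (odd b); case: (odd c); rewrite /= ?add0r ?addr0 ?add0n //.
by rewrite big_ord_recl subn0 addrC.
Qed.

End SignedSums.

Lemma mul_bin_double_succ m : m.+1 * 'C(m.*2, m.+1) = m * 'C(m.*2, m).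
Proof. by rewrite mul_bin_left -addnn addnK. Qed.

Lemma catalan_binomial m : catalan m = 'C(m.*2, m) - 'C(m.*2, m.+1).
Proof.
have central : 'C(m.*2, m) = m.+1 * ('C(m.*2, m) - 'C(m.*2, m.+1)).
  by rewrite mulnBr mul_bin_double_succ -mulnBl subSnn mul1n.
by rewrite /catalan {1}central mulKn.
Qed.

Lemma bin_double_succ m :
  'C(m.+1.*2, m.+1) = ('C(m.*2, m) + 'C(m.*2, m.+1)).*2.
Proof.
have sym : 'C(m.*2.+1, m) = 'C(m.*2.+1, m.+1).
  by rewrite -[in LHS]bin_sub; [congr 'C(_, _) | ]; lia.
by rewrite doubleS binS sym binS; lia.
Qed.

Lemma bin_double_succ_catalan m :
  'C(m.+1.*2, m.+1) + (catalan m).*2 = 4 * 'C(m.*2, m).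
Proof.
have bin_le : 'C(m.*2, m.+1) <= 'C(m.*2, m).
  by rewrite -(leq_pmul2l (ltn0Sn m)) mul_bin_double_succ leq_mul2r leqnSn orbT.
rewrite bin_double_succ catalan_binomial; lia.
Qed.

Lemma sum_pow2_catalan m :
  \sum_(i < m) 2 ^ i.*2.+1 * catalan (m - i - 1) + 'C(m.*2, m) = 2 ^ m.*2.
Proof.
have pow4 n : 2 ^ n.+1.*2 = 4 * 2 ^ n.*2 by rewrite doubleS 2!expnS mulnA.
elim: m => [|m IH]; first by rewrite big_ord0 bin0.
rewrite big_ord_recl subn0 subSS subn0.
under eq_bigr do rewrite lift0 subSS expnS pow4 mulnCA -expnS -mulnA.
rewrite -big_distrr pow4 -IH /=.
have := bin_double_succ_catalan m; lia.
Qed.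

Lemma odd_sumn s : odd (sumn s) = odd (k_o s).
Proof. by elim: s => //= x s IH; rewrite oddD IH /k_o /=; case: (odd x). Qed.

Local Open Scope ring_scope.

Theorem corollary8p6 (beta : seq nat) :
  is_composition beta -> (0 < sumn beta)%N -> ~~ odd (sumn beta) ->
  \sum_(alpha <- compositions (sumn beta) |
          refines alpha beta && odd (head 0%N alpha) && odd (last 0%N alpha))
     ((-1) ^+ k_e alpha * (2 ^+ (k_o beta - k_o alpha + 1)%N)
        * (catalan ((k_o alpha)./2 - 1)%N)%:R : int)
  = (2 ^+ k_o beta - ('C(k_o beta, (k_o beta)./2))%:R : int).
Proof.
move=> comp_beta _ even_sum.
have [m k_o_beta] : exists m, k_o beta = m.*2.
  by exists (k_o beta)./2; rewrite -[LHS]odd_double_half -odd_sumn (negbTE even_sum).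
under eq_bigl do rewrite -andbA.
rewrite -big_filter_cond (perm_big _ (perm_refines_coarsenings comp_beta)) /=.
under eq_bigr do rewrite -mulrA.
rewrite (sum_coarsenings_odd_ends _
  (fun j => 2 ^+ (k_o beta - j + 1) * (catalan (j./2 - 1))%:R)) /=.
rewrite k_o_beta uphalf_double doubleK.
have /(congr1 (fun k : nat => k%:R : int)) := sum_pow2_catalan m.
rewrite natrD natr_sum natrX => <-; rewrite addrK.
apply: eq_bigr => i _; have i_lt := ltn_ord i.
rewrite natrM natrX -doubleB doubleK; congr (2 ^+ _ * _); lia.
Qed.
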